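(* Let $n\ge 1$, let $L\subseteq\mathbb Z^n$ be a lattice, and let $(\cdot,\cdot)$ be an inner product on $\mathbb R^n$ for which the canonical basis $\vec e_1,\dots,\vec e_n$ is orthogonal (not necessarily orthonormal). Assume that $(L,(\cdot,\cdot))$ is a zonotopal lattice. Then a vector $\vec v\in L$ is an elementary vector of $L$ if and only if it is a strict Voronoi vector of $L$ (with respect to $(\cdot,\cdot)$).
   Context: A lattice $L\subseteq\mathbb Z^n$ is the $\mathbb Z$-span of finitely many linearly independent vectors of $\mathbb Z^n$. The support of $\vec v\in\mathbb R^n$ is $\underline{\vec v}=\{i: v_i\neq 0\}$. A vector $\vec u\in L$ is elementary if $\vec u\in\{-1,0,+1\}^n\setminus\{\vec 0\}$ and $\vec u$ has minimal support among all vectors of $L\setminus\{\vec 0\}$ (i.e. no nonzero vector of $L$ has support strictly contained in $\underline{\vec u}$). The pair $(L,(\cdot,\cdot))$ is a zonotopal lattice if for every $\vec v\in L\setminus\{\vec 0\}$ there is an elementary vector $\vec u\in L$ with $\underline{\vec u}\subseteq\underline{\vec v}$. A vector $\vec v\in L\setminus\{\vec 0\}$ is a strict Voronoi vector if $\pm\vec v$ are the only vectors of minimal norm $(\vec w,\vec w)$ among all $\vec w$ in the coset $\vec v+2L$. *)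

From HB Require Import structures.
From mathcomp Require Import all_boot all_order all_algebra.
From mathcomp Require Import reals.
Set Implicit Arguments. Unset Strict Implicit. Unset Printing Implicit Defensive.
Import Order.TTheory GRing.Theory Num.Theory.
Local Open Scope ring_scope.

(* Vectors of Z^n are row vectors 'rV[int]_n.  A lattice L is given by a
   generator matrix B : 'M[int]_(m,n) whose m rows are linearly independent;
   L is the Z-span of the rows of B. *)
Definition lin_indep_rows (m n : nat) (B : 'M[int]_(m, n)) : Prop :=
  forall c : 'rV[int]_m, c *m B = 0 -> c = 0.

Definition inL (m n : nat) (B : 'M[int]_(m, n)) (v : 'rV[int]_n) : Prop :=
  exists c : 'rV[int]_m, v = c *m B.

Definition supp (n : nat) (v : 'rV[int]_n) : {set 'I_n} :=
  [set i | v 0 i != 0].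

(* The inner product on R^n for which the canonical basis is orthogonal,
   with (e_i, e_i) = w i > 0; restricted to integer vectors. *)
Definition ip (R : realType) (n : nat) (w : 'I_n -> R) (x y : 'rV[int]_n) : R :=
  \sum_(i < n) w i * ((x 0 i)%:~R * (y 0 i)%:~R).

Definition elementary (m n : nat) (B : 'M[int]_(m, n)) (u : 'rV[int]_n) : Prop :=
  [/\ inL B u,
      (forall i, u 0 i \in [:: -1; 0; 1]),
      u != 0 &
      ~ (exists x, [/\ inL B x, x != 0 & supp x \proper supp u])].

Definition zonotopal (m n : nat) (B : 'M[int]_(m, n)) : Prop :=
  forall v, inL B v -> v != 0 ->
    exists u, elementary B u /\ supp u \subset supp v.

(* v is a strict Voronoi vector: nonzero, in L, and +-v are the only vectors
   of minimal norm in the coset v + 2L. *)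
Definition strict_voronoi (R : realType) (m n : nat) (B : 'M[int]_(m, n))
    (w : 'I_n -> R) (v : 'rV[int]_n) : Prop :=
  [/\ inL B v, v != 0 &
      forall x, inL B x ->
        ip w v v <= ip w (v + 2%:~R *: x) (v + 2%:~R *: x) /\
        (ip w (v + 2%:~R *: x) (v + 2%:~R *: x) = ip w v v ->
           v + 2%:~R *: x = v \/ v + 2%:~R *: x = - v)].

(* For [x] in [L], [(v + 2x, v + 2x) - (v, v) = 4 * \sum_i w_i x_i (x_i + v_i)].
   If [v] has entries in {-1, 0, 1}, each term is nonnegative and vanishes
   only when [x_i] is [0] or [-v_i]; minimality of the support of an
   elementary [v] then leaves [x = 0] or [x = -v].  Conversely, zonotopality
   yields an elementary [e] conformal to [v] (obtained by repeatedly cancelling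
   a coordinate of [v] against elementary vectors); taking [x = -e] makes every
   term nonpositive, so strict Voronoi forces [v - 2e = +-v], i.e. [e = v]. *)

From HB Require Import structures.
From mathcomp Require Import all_boot all_order all_algebra.
From mathcomp Require Import reals.
From mathcomp Require Import zify ring.
Set Implicit Arguments. Unset Strict Implicit. Unset Printing Implicit Defensive.
Import Order.TTheory GRing.Theory Num.Theory.
Local Open Scope ring_scope.

Definition conformal (n : nat) (x y : 'rV[int]_n) : Prop :=
  forall i, x 0 i = 0 \/ 0 < x 0 i /\ 0 < y 0 i \/ x 0 i < 0 /\ y 0 i < 0.

Lemma conformal_trans (n : nat) (x y z : 'rV[int]_n) :
  conformal x y -> conformal y z -> conformal x z.
Proof. by move=> Cxy Cyz i; have := Cxy i; have := Cyz i; lia. Qed.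

Section Lattice.

Variables (m n : nat) (B : 'M[int]_(m, n)).

Lemma inLBZ (x y : 'rV[int]_n) (k : int) :
  inL B x -> inL B y -> inL B (x - k *: y).
Proof. by move=> [a ->] [b ->]; exists (a - k *: b); rewrite mulmxBl scalemxAl. Qed.

Lemma inLN (x : 'rV[int]_n) : inL B x -> inL B (- x).
Proof. by move=> [a ->]; exists (- a); rewrite mulNmx. Qed.

Lemma elementary_entry (e : 'rV[int]_n) :
  elementary B e -> forall i, e 0 i = -1 \/ e 0 i = 0 \/ e 0 i = 1.
Proof. by case=> _ e01 _ _ i; move: (e01 i); rewrite !inE => /or3P[] /eqP; tauto. Qed.

Lemma elementaryN (e : 'rV[int]_n) : elementary B e -> elementary B (- e).
Proof.
move=> Ee; have e01 := elementary_entry Ee; case: Ee => Le _ e_nz e_min.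
have supp_Ne : supp (- e) = supp e by apply/setP => i; rewrite !inE mxE oppr_eq0.
split; rewrite ?supp_Ne ?oppr_eq0 //; first exact: inLN.
by move=> i; rewrite mxE; case: (e01 i) => [->|[->|->]].
Qed.

(* Subtracting [|z_i|] copies of [e] cancels coordinate [i] of [z] without
   flipping the sign of any other coordinate, since [i] minimises [|z_j|]
   among the coordinates where [e] and [z] have the same sign. *)
Lemma elementary_reduce (e z : 'rV[int]_n) :
  elementary B e -> inL B z -> supp e \subset supp z ->
  conformal e z \/ conformal (- e) z \/
  exists z', [/\ inL B z', z' != 0, conformal z' z & (#|supp z'| < #|supp z|)%N].
Proof.
move=> Ee Lz s_ez; have e01 := elementary_entry Ee; case: Ee => Le _ _ _.
have ez i : e 0 i != 0 -> z 0 i != 0.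
  by move=> nz_ei; have := subsetP s_ez i; rewrite !inE; apply.
have [j disj | no_dis] := pickP (fun j => e 0 j * z 0 j < 0); last first.
  left=> i; have := no_dis i; have := ez i; case: (e01 i) => [->|[->|->]]; lia.
have [i0 agi0 | no_agr] := pickP (fun i => 0 < e 0 i * z 0 i); last first.
  right; left=> i; have := no_agr i; have := ez i; rewrite mxE.
  by case: (e01 i) => [->|[->|->]]; lia.
right; right.
have [i agi i_min] :=
  arg_minnP (P := fun i => 0 < e 0 i * z 0 i) (fun i => absz (z 0 i)) agi0.
pose z' := z - (z 0 i * e 0 i) *: e.
have z'E k : z' 0 k = z 0 k - z 0 i * e 0 i * e 0 k by rewrite !mxE.
have z'_coord k :
  [/\ z' 0 k = 0 \/ 0 < z' 0 k /\ 0 < z 0 k \/ z' 0 k < 0 /\ z 0 k < 0,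
      z 0 k = 0 -> z' 0 k = 0 & e 0 k * z 0 k < 0 -> z' 0 k != 0].
  rewrite z'E; have := i_min k; have := ez k; move: agi.
  by case: (e01 i) => [->|[->|->]]; case: (e01 k) => [->|[->|->]]; split; lia.
exists z'; split.
- exact: inLBZ.
- have [_ _ /(_ disj)] := z'_coord j; apply: contra_neq => ->; exact: mxE.
- by move=> k; case: (z'_coord k).
- apply: proper_card; apply/properP; split.
    apply/subsetP => k; rewrite !inE; have [_ z'_0 _] := z'_coord k.
    exact: contra_neq z'_0.
  exists i; rewrite inE ?negbK ?z'E; move: agi.
  all: by case: (e01 i) => [->|[->|->]]; lia.
Qed.

Lemma exists_conformal_elementary (z : 'rV[int]_n) :
  zonotopal B -> inL B z -> z != 0 -> exists e, elementary B e /\ conformal e z.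
Proof.
move=> zonoB; have [k] := ubnP #|supp z|; elim: k z => // k IH z.
rewrite ltnS => z_le Lz z_nz; have [e [Ee s_ez]] := zonoB z Lz z_nz.
have [Cez | [CNez | [z' [Lz' z'_nz Cz'z lt_z'z]]]] :=
  elementary_reduce Ee Lz s_ez.
- by exists e.
- by exists (- e); split; first exact: elementaryN.
- have [e' [Ee' Ce'z']] := IH z' (leq_trans lt_z'z z_le) Lz' z'_nz.
  by exists e'; split; last exact: conformal_trans Ce'z' Cz'z.
Qed.

End Lattice.

Lemma ip_shift (R : realType) (n : nat) (w : 'I_n -> R) (v x : 'rV[int]_n) :
  ip w (v + 2%:~R *: x) (v + 2%:~R *: x) =
  ip w v v + \sum_i w i * (4 * (x 0 i * (x 0 i + v 0 i)))%:~R.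
Proof.
rewrite /ip -big_split /=; apply: eq_bigr => i _; rewrite !mxE -mulrDr.
by congr (_ * _); rewrite -!intrM -intrD intz; congr (_%:~R); ring.
Qed.

Lemma weighted_sum_eq0 (R : numDomainType) (n : nat) (w : 'I_n -> R)
    (d : 'I_n -> int) :
  (forall i, 0 < w i) -> (forall i, 0 <= d i) ->
  \sum_i w i * (d i)%:~R = 0 -> forall i, d i = 0.
Proof.
move=> w_gt0 d_ge0 sum0 i.
have term_ge0 j : true -> 0 <= w j * (d j)%:~R.
  by move=> _; rewrite mulr_ge0 ?ler0z ?(ltW (w_gt0 j)).
have := psumr_eq0P term_ge0 sum0 (i := i) isT; move/eqP.
by rewrite mulf_eq0 (gt_eqF (w_gt0 i)) intr_eq0 => /eqP.
Qed.

Section Voronoi.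

Variables (R : realType) (m n : nat) (B : 'M[int]_(m, n)) (w : 'I_n -> R).
Hypothesis w_gt0 : forall i, 0 < w i.

Lemma elementary_strict_voronoi (v : 'rV[int]_n) :
  elementary B v -> strict_voronoi B w v.
Proof.
move=> Ev; have v01 := elementary_entry Ev; case: Ev => Lv _ v_nz v_min.
split=> // x Lx.
have gain_ge0 i : 0 <= 4 * (x 0 i * (x 0 i + v 0 i)).
  by case: (v01 i) => [->|[->|->]]; nia.
rewrite ip_shift; split.
  by rewrite lerDl sumr_ge0 // => i _; rewrite mulr_ge0 ?ler0z ?(ltW (w_gt0 i)).
move=> /eqP; rewrite -[X in _ == X]addr0 => /eqP /addrI gain0.
have x_v i : x 0 i = 0 \/ x 0 i = - v 0 i.
  by have := weighted_sum_eq0 w_gt0 gain_ge0 gain0 i; nia.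
have [-> | x_nz] := eqVneq x 0; first by left; rewrite scaler0 addr0.
suff -> : x = - v.
  by right; apply/rowP => i; rewrite !mxE intz; move: (v 0 i) => a; lia.
apply/rowP => i; rewrite mxE; case: (x_v i) => // x_i0.
have [v_i0 | v_inz] := eqVneq (v 0 i) 0; first by rewrite x_i0 v_i0 oppr0.
case: v_min; exists x; split=> //; apply/properP; split.
  apply/subsetP => j; rewrite !inE.
  by case: (x_v j) => ->; rewrite ?eqxx ?oppr_eq0.
by exists i; rewrite inE ?negbK ?x_i0 ?eqxx.
Qed.

Lemma strict_voronoi_elementary (v : 'rV[int]_n) :
  zonotopal B -> strict_voronoi B w v -> elementary B v.
Proof.
move=> zonoB [Lv v_nz v_min].
have [e [Ee Cev]] := exists_conformal_elementary zonoB Lv v_nz.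
have e01 := elementary_entry Ee; have [Le _ e_nz _] := Ee.
have [ge_v eq_v] := v_min (- e) (inLN Le).
have le_v : ip w (v + 2%:~R *: - e) (v + 2%:~R *: - e) <= ip w v v.
  rewrite ip_shift gerDl sumr_le0 // => i _.
  rewrite mulr_ge0_le0 ?(ltW (w_gt0 i)) // lerz0 mxE.
  by have := Cev i; case: (e01 i) => [->|[->|->]]; lia.
have eq_norm : ip w (v + 2%:~R *: - e) (v + 2%:~R *: - e) = ip w v v.
  by apply/le_anti; rewrite le_v ge_v.
case: (eq_v eq_norm) => /rowP v2e.
- case/eqP: e_nz; apply/rowP => i; have := v2e i.
  by rewrite !mxE intz; move: (v 0 i) (e 0 i) => a b; lia.
- suff -> : v = e by [].
  apply/rowP => i; have := v2e i.
  by rewrite !mxE intz; move: (v 0 i) (e 0 i) => a b; lia.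
Qed.

End Voronoi.

Theorem lemma2 (R : realType) (n m : nat) (B : 'M[int]_(m, n))
  (w : 'I_n -> R) :
  (1 <= n)%N ->
  lin_indep_rows B ->
  (forall i, 0 < w i) ->
  zonotopal B ->
  forall v : 'rV[int]_n, inL B v ->
    (elementary B v <-> strict_voronoi B w v).
Proof.
move=> _ _ w_gt0 zonoB v _; split.
- exact: elementary_strict_voronoi.
- exact: strict_voronoi_elementary.
Qed.
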